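(* The following are equivalent: (i) $\sup_{d\in\mathbb N} n^{X_d}(\varepsilon)=\infty$ for every $\varepsilon\in(0,1)$; (ii) $\inf_{d\in\mathbb N}\bar\lambda^{X_d}_1=0$.
   Context: For each $d\in\mathbb N$, $X_d$ is a random element of a separable Hilbert space $H_d$ with $\mathbb E X_d=0$ and $\mathbb E\|X_d\|_{H_d}^2<\infty$. For a centered Hilbert-space random element $Z$ with finite second moment, $\lambda^Z_1\ge\lambda^Z_2\ge\dots\ge 0$ denote the eigenvalues of its covariance operator $K^Z$ listed with multiplicity (padded with zeros if there are finitely many), $\Lambda^Z=\sum_k\lambda^Z_k=\mathbb E\|Z\|^2$, and $\bar\lambda^Z_k=\lambda^Z_k/\Lambda^Z$. It is assumed that $\lambda^{X_d}_1>0$ for all $d$. The average case approximation complexity is $n^{X_d}(\varepsilon)=\min\{n\in\mathbb N: e^{X_d}(n)\le \varepsilon\, e^{X_d}(0)\}$ for $\varepsilon\in(0,1)$, where $e^{X_d}(0)=(\mathbb E\|X_d\|^2)^{1/2}$ and $e^{X_d}(n)$ is the infimum of $(\mathbb E\|X_d-\sum_{m=1}^n l_m(X_d)\psi_m\|^2)^{1/2}$ over all $\psi_m\in H_d$, $l_m\in H_d^*$; equivalently $n^{X_d}(\varepsilon)=\min\{n\in\mathbb N:\ \sum_{k>n}\bar\lambda^{X_d}_k\le\varepsilon^2\}$. *)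

From Stdlib Require Import Reals Lra.
Open Scope R_scope.

(* An eigenvalue sequence of a covariance operator of a centered random
   element with finite second moment: lam k = lambda_{k+1} (0-based index),
   nonnegative, nonincreasing, summable with sum Lam = E||X||^2. *)
Definition covariance_eigenvalues (lam : nat -> R) (Lam : R) : Prop :=
  (forall k, 0 <= lam k) /\
  (forall k, lam (S k) <= lam k) /\
  infinite_sum lam Lam.

Fixpoint psum (lam : nat -> R) (n : nat) : R :=
  match n with
  | O => 0
  | S m => psum lam m + lam m
  end.

(* normalized tail  sum_{k>n} bar-lambda_k *)
Definition normalized_tail (lam : nat -> R) (Lam : R) (n : nat) : R :=
  (Lam - psum lam n) / Lam.

(* n is the average case approximation complexity n(eps):
   the minimal n with sum_{k>n} bar-lambda_k <= eps^2. *)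
Definition is_complexity (lam : nat -> R) (Lam : R) (eps : R) (n : nat) : Prop :=
  normalized_tail lam Lam n <= eps ^ 2 /\
  (forall m, (m < n)%nat -> eps ^ 2 < normalized_tail lam Lam m).

Definition is_glb (E : R -> Prop) (m : R) : Prop :=
  (forall x, E x -> m <= x) /\ (forall b, (forall x, E x -> b <= x) -> b <= m).

From Stdlib Require Import Reals Lra Lia Classical Wf_nat.
Open Scope R_scope.

(* Everything is governed by the head ratio r = lambda_1 / Lambda.  Since the
   eigenvalues are nonincreasing, the first n of them sum to at most n lambda_1,
   so the normalized tail after n terms is at least 1 - n r; hence
   n(eps) >= (1 - eps^2) / r, and complexities bounded uniformly in d force r
   to stay away from 0.  Conversely, the tail after one term is exactly 1 - r,
   so if r >= c > 0 for every d then n(eps) <= 1 as soon as eps^2 >= 1 - c. *)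

Lemma psum_S (l : nat -> R) (n : nat) : psum l (S n) = sum_f_R0 l n.
Proof. induction n as [|n IH]; simpl in *; [lra | rewrite <- IH; simpl; lra]. Qed.

Lemma psum_le_mul_head (l : nat -> R) :
  (forall k, l (S k) <= l k) -> forall n, psum l n <= INR n * l 0%nat.
Proof.
  intros Hdec.
  assert (Hhead : forall k, l k <= l 0%nat).
  { induction k as [|k IH]; [lra | specialize (Hdec k); lra]. }
  induction n as [|n IH]; [simpl; lra |].
  rewrite S_INR; simpl; specialize (Hhead n); lra.
Qed.

Lemma complexity_le (l : nat -> R) (L eps : R) (n m : nat) :
  is_complexity l L eps n -> normalized_tail l L m <= eps ^ 2 -> (n <= m)%nat.
Proof.
  intros [_ Hmin] Hm.
  destruct (Nat.le_gt_cases n m) as [Hnm | Hmn]; [exact Hnm |].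
  specialize (Hmin m Hmn); lra.
Qed.

Section CovarianceEigenvalues.

Variables (l : nat -> R) (L : R).
Hypothesis Hcov : covariance_eigenvalues l L.
Hypothesis Hhead : 0 < l 0%nat.

Lemma head_le_total : l 0%nat <= L.
Proof.
  destruct Hcov as [Hnn [_ Hsum]].
  exact (sum_incr l 0 L Hsum Hnn).
Qed.

Lemma total_pos : 0 < L.
Proof. pose proof head_le_total; lra. Qed.

Lemma head_ratio_pos : 0 < l 0%nat / L.
Proof. apply Rdiv_lt_0_compat; [exact Hhead | exact total_pos]. Qed.

Lemma normalized_tail_1 : normalized_tail l L 1 = 1 - l 0%nat / L.
Proof.
  pose proof total_pos.
  unfold normalized_tail; simpl; field; lra.
Qed.

Lemma normalized_tail_ge (n : nat) : 1 - INR n * (l 0%nat / L) <= normalized_tail l L n.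
Proof.
  destruct Hcov as [_ [Hdec _]].
  pose proof (psum_le_mul_head l Hdec n).
  pose proof total_pos.
  unfold normalized_tail.
  replace (1 - INR n * (l 0%nat / L)) with ((L - INR n * l 0%nat) / L) by (field; lra).
  apply Rmult_le_compat_r; [apply Rlt_le, Rinv_0_lt_compat; lra | lra].
Qed.

Lemma complexity_exists (eps : R) : 0 < eps -> exists n, is_complexity l L eps n.
Proof.
  intros Heps.
  pose proof total_pos as HL.
  set (P n := normalized_tail l L n <= eps ^ 2).
  assert (HP : exists n, P n).
  { destruct Hcov as [_ [_ Hsum]].
    destruct (Hsum (eps ^ 2 * L)) as [N HN].
    { apply Rmult_lt_0_compat; [apply pow_lt |]; lra. }
    specialize (HN N (Nat.le_refl N)).
    unfold Rdist in HN; apply Rabs_def2 in HN.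
    exists (S N); unfold P, normalized_tail; rewrite psum_S.
    apply Rmult_le_reg_r with L; [exact HL |].
    unfold Rdiv; rewrite Rmult_assoc, Rinv_l; lra. }
  destruct (dec_inh_nat_subset_has_unique_least_element P (fun n => classic (P n)) HP)
    as [n [[Pn Hleast] _]].
  exists n; split; [exact Pn |].
  intros m Hmn; apply Rnot_le_lt; intros Pm.
  specialize (Hleast m Pm); lia.
Qed.

Lemma complexity_lower_bound (eps : R) (n : nat) :
  is_complexity l L eps n -> 1 - eps ^ 2 <= INR n * (l 0%nat / L).
Proof.
  intros [Htail _].
  pose proof (normalized_tail_ge n); lra.
Qed.

Lemma head_ratio_ge_of_complexity_le (eps : R) (n M : nat) :
  is_complexity l L eps n -> (n <= M)%nat -> eps < 1 ->
  (1 - eps ^ 2) / (INR M + 1) <= l 0%nat / L.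
Proof.
  intros Hc HnM Heps.
  pose proof (complexity_lower_bound eps n Hc).
  pose proof head_ratio_pos.
  apply le_INR in HnM.
  assert (HM : 0 < INR M + 1) by (pose proof (pos_INR M); lra).
  apply Rmult_le_reg_r with (INR M + 1); [exact HM |].
  unfold Rdiv; rewrite Rmult_assoc, Rinv_l by lra.
  nra.
Qed.

End CovarianceEigenvalues.

Theorem proposition2 (lam : nat -> nat -> R) (Lam : nat -> R)
  (Hcov : forall d, covariance_eigenvalues (lam d) (Lam d))
  (Hpos : forall d, 0 < lam d 0%nat) :
  (forall eps, 0 < eps < 1 ->
     ~ (exists M : nat, forall d n, is_complexity (lam d) (Lam d) eps n -> (n <= M)%nat))
  <->
  is_glb (fun x => exists d, x = lam d 0%nat / Lam d) 0.
Proof.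
  split.
  - intros Hunbounded; split.
    { intros x [d ->]; exact (Rlt_le _ _ (head_ratio_pos _ _ (Hcov d) (Hpos d))). }
    intros b Hb; apply Rnot_lt_le; intros Hb0.
    set (c := Rmin b 1).
    assert (Hc : 0 < c <= 1 /\ c <= b)
      by (unfold c; repeat split; [apply Rmin_glb_lt | apply Rmin_r | apply Rmin_l]; lra).
    apply (Hunbounded (1 - c / 2)); [lra |].
    exists 1%nat; intros d n Hn.
    apply (complexity_le _ _ _ _ _ Hn).
    rewrite (normalized_tail_1 _ _ (Hcov d) (Hpos d)).
    assert (b <= lam d 0%nat / Lam d) by (apply Hb; eauto).
    nra.
  - intros [_ Hglb] eps Heps [M HM].
    assert (Hlower : (1 - eps ^ 2) / (INR M + 1) <= 0).
    { apply Hglb; intros x [d ->].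
      destruct (complexity_exists _ _ (Hcov d) (Hpos d) eps) as [n Hn]; [lra |].
      exact (head_ratio_ge_of_complexity_le _ _ (Hcov d) (Hpos d) eps n M Hn (HM d n Hn)
               (proj2 Heps)). }
    assert (0 < (1 - eps ^ 2) / (INR M + 1)); [| lra].
    apply Rdiv_lt_0_compat; [nra | pose proof (pos_INR M); lra].
Qed.
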